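(* Let $C=(C_n,d_n)_{n\in\mathbb{Z}}$ be a free chain complex of $\mathbb{Z}$-modules with distinguished $\mathbb{Z}$-bases $\beta_n\subset C_n$, equipped with a finite filtration $0=C^0\subseteq C^1\subseteq\cdots\subseteq C^m=C$ by sub-chain complexes, each $C^i_n$ being the submodule spanned by $\beta_n\cap C^i_n$. Let $V=\{(\sigma_i;\tau_i)\}_{i\in I}$ be an admissible discrete vector field on $C$ such that for every $i\in I$ the cells $\sigma_i$ and $\tau_i$ have the same filtration index. Then the canonical vector-field reduction $\rho=(f,g,h):(C_n,d_n)\Rightarrow(C^c_n,d'_n)$ is compatible with the filtration: the differential $d'$ preserves the filtration $C^{c,i}_n=\mathbb{Z}[\beta^c_n\cap C^i_n]$ of the critical complex (so $C^c$ is a filtered chain complex), $f$ and $g$ are filtered chain complex morphisms ($f(C^i_n)\subseteq C^{c,i}_n$, $g(C^{c,i}_n)\subseteq C^i_n$), and $h(C^i_n)\subseteq C^i_{n+1}$ for all $n,i$, i.e. the homotopy $h$ has order $\leq 0$.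
   Context: A reduction $\rho=(f,g,h):D\Rightarrow C'$ between chain complexes consists of chain morphisms $f:D\to C'$, $g:C'\to D$ and a degree $+1$ homomorphism $h:D\to D$ with $fg=\mathrm{id}$, $gf+dh+hd=\mathrm{id}_D$, $fh=0$, $hg=0$, $hh=0$. A generator $\sigma\in\beta_n$ has filtration index $i$ if $\sigma\in C^i_n$ and $\sigma\notin C^{i-1}_n$. A discrete vector field (DVF) on $C$ is a set $V=\{(\sigma_i;\tau_i)\}_{i\in I}$ with $\sigma_i\in\beta_n$, $\tau_i\in\beta_{n+1}$ for some $n$ (depending on $i$), the coefficient of $\sigma_i$ in $d\tau_i$ equal to $\pm1$, and each basis element appearing at most once in $V$. Cells not appearing in $V$ are critical. A $V$-path of degree $n$ and length $m$ is a sequence $\{(\sigma_{i_k};\tau_{i_k})\}_{0\le k<m}$ of elements of $V$ with each $\tau_{i_k}$ an $n$-cell and, for $0<k<m$, $\sigma_{i_k}$ a face (nonzero coefficient in $d\tau_{i_{k-1}}$) of $\tau_{i_{k-1}}$ different from $\sigma_{i_{k-1}}$; it starts from $\sigma_{i_0}$. $V$ is admissible if for each $n$ there is a function $\lambda_n:\beta_n\to\mathbb{N}$ such that every $V$-path starting from $\sigma\in\beta_n$ has length at most $\lambda_n(\sigma)$. Canonical reduction: $V$ splits each $\beta_n=\beta^t_n\sqcup\beta^s_n\sqcup\beta^c_n$ into target cells (the $\tau_i$), source cells (the $\sigma_i$) and critical cells, hence $C_n=C^t_n\oplus C^s_n\oplus C^c_n$, and $d_n$ is written as a $3\times3$ block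 matrix $(d_{n,a,b})$ with respect to these decompositions (index $1=t$, $2=s$, $3=c$). For admissible $V$, $d_{n,2,1}:C^t_n\to C^s_{n-1}$ is an isomorphism. Then $C^c_n=\mathbb{Z}[\beta^c_n]$ and $d'_n=d_{n,3,3}-d_{n,3,1}d_{n,2,1}^{-1}d_{n,2,3}$, $f_n=[\,0\;\; -d_{n,3,1}d_{n,2,1}^{-1}\;\;1\,]$, $g_n=[\,-d_{n,2,1}^{-1}d_{n,2,3};\;0;\;1\,]^T$ (column), and $h_n$ is the block matrix whose only nonzero block is $d_{n,2,1}^{-1}$ in position $(1,2)$, i.e. $h$ sends $C^s_{n}$ to $C^t_{n+1}$ via $d_{n+1,2,1}^{-1}$ and is zero on $C^t_n\oplus C^c_n$. This $\rho$ is a reduction. *)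

From HB Require Import structures.
From mathcomp Require Import all_boot all_order all_algebra.
From mathcomp Require Import freeg.
From Stdlib Require Import ClassicalEpsilon.
Set Implicit Arguments. Unset Strict Implicit. Unset Printing Implicit Defensive.
Import Order.TTheory GRing.Theory Num.Theory.
Local Open Scope ring_scope.

(* Encoding: the graded free module  (+)_n C_n  with C_n = Z[beta_n] is
   {freeg Cell / int}, where Cell is the disjoint union of all the bases
   beta_n and  cdeg : Cell -> int  gives the degree of a basis element.
   A chain c lies in C_n iff it is supported on cells of degree n. *)
Notation chain Cell := {freeg Cell / int}.

Definition decP (P : Prop) : bool :=
  if excluded_middle_informative P then true else false.

Definition supp_in (Cell : choiceType) (P : Cell -> bool) (c : chain Cell) :=
  forall x, coeff x c != 0 -> P x.

Definition bdry (Cell : choiceType) (bd : Cell -> chain Cell) (c : chain Cell)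
  : chain Cell := fglift bd c.

Definition proj (Cell : choiceType) (P : Cell -> bool) (c : chain Cell)
  : chain Cell := fglift (fun x => if P x then << x >> else 0) c.

Definition is_DVF (Cell : choiceType) (cdeg : Cell -> int)
    (bd : Cell -> chain Cell) (V : Cell -> Cell -> bool) : Prop :=
  (forall s t, V s t -> cdeg t = cdeg s + 1 /\
                        (coeff s (bd t) = 1 \/ coeff s (bd t) = -1)) /\
  (* each basis element appears at most once in V *)
  (forall s t s' t', V s t -> V s' t' ->
     (s = s' \/ s = t' \/ t = s' \/ t = t') -> s = s' /\ t = t').

Definition Vpath (Cell : choiceType) (cdeg : Cell -> int)
    (bd : Cell -> chain Cell) (V : Cell -> Cell -> bool) (n : int)
    (p : seq (Cell * Cell)) : bool :=
  all (fun q => V q.1 q.2 && (cdeg q.2 == n)) p &&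
  sorted (fun q q' : Cell * Cell =>
            (coeff q'.1 (bd q.2) != 0) && (q'.1 != q.1)) p.

Definition starts_from (Cell : choiceType) (p : seq (Cell * Cell)) (s : Cell) :=
  if p is q :: _ then q.1 == s else false.

Definition admissible (Cell : choiceType) (cdeg : Cell -> int)
    (bd : Cell -> chain Cell) (V : Cell -> Cell -> bool) : Prop :=
  exists lam : int -> Cell -> nat,
    forall (n : int) (s : Cell), cdeg s = n ->
    forall (k : int) (p : seq (Cell * Cell)),
      Vpath cdeg bd V k p -> starts_from p s -> (size p <= lam n s)%N.

Definition is_src (Cell : choiceType) (V : Cell -> Cell -> bool) (x : Cell) :=
  decP (exists t, V x t).
Definition is_tgt (Cell : choiceType) (V : Cell -> Cell -> bool) (x : Cell) :=
  decP (exists s, V s x).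
Definition is_crit (Cell : choiceType) (V : Cell -> Cell -> bool) (x : Cell) :=
  ~~ is_src V x && ~~ is_tgt V x.

Definition d21 (Cell : choiceType) (bd : Cell -> chain Cell)
    (V : Cell -> Cell -> bool) (c : chain Cell) : chain Cell :=
  proj (is_src V) (bdry bd (proj (is_tgt V) c)).

(* the inverse of the isomorphism d_{2,1} : C^t -> C^s
   (a two-sided inverse between C^s and C^t, chosen classically; it is
   unique on C^s when it exists, which is the case for admissible V) *)
Definition is_d21_inverse (Cell : choiceType) (bd : Cell -> chain Cell)
    (V : Cell -> Cell -> bool) (k : chain Cell -> chain Cell) : Prop :=
  (forall c, supp_in (is_src V) c ->
      supp_in (is_tgt V) (k c) /\ d21 bd V (k c) = c) /\
  (forall c, supp_in (is_tgt V) c -> k (d21 bd V c) = c).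

Definition d21inv (Cell : choiceType) (bd : Cell -> chain Cell)
    (V : Cell -> Cell -> bool) : chain Cell -> chain Cell :=
  epsilon (inhabits (fun _ => 0)) (is_d21_inverse bd V).

(* C^c_n = Z[beta^c_n] is viewed as the submodule of C_n spanned by the
   critical cells (the summand C^c_n of C_n = C^t_n + C^s_n + C^c_n). *)

Definition red_h (Cell : choiceType) (bd : Cell -> chain Cell)
    (V : Cell -> Cell -> bool) (c : chain Cell) : chain Cell :=
  d21inv bd V (proj (is_src V) c).

(* f = [ 0  -d_{3,1} d_{2,1}^{-1}  1 ] *)
Definition red_f (Cell : choiceType) (bd : Cell -> chain Cell)
    (V : Cell -> Cell -> bool) (c : chain Cell) : chain Cell :=
  proj (is_crit V) c
  - proj (is_crit V) (bdry bd (d21inv bd V (proj (is_src V) c))).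

(* g = [ -d_{2,1}^{-1} d_{2,3} ; 0 ; 1 ]  (applied to critical chains) *)
Definition red_g (Cell : choiceType) (bd : Cell -> chain Cell)
    (V : Cell -> Cell -> bool) (c : chain Cell) : chain Cell :=
  c - d21inv bd V (proj (is_src V) (bdry bd c)).

Definition red_d (Cell : choiceType) (bd : Cell -> chain Cell)
    (V : Cell -> Cell -> bool) (c : chain Cell) : chain Cell :=
  proj (is_crit V) (bdry bd c)
  - proj (is_crit V)
      (bdry bd (d21inv bd V (proj (is_src V) (bdry bd c)))).

(* F i x  <->  the basis element x lies in C^i (i.e. x in beta cap C^i) *)
Definition filt_index (Cell : choiceType) (F : nat -> Cell -> bool)
    (i : nat) (x : Cell) : bool :=
  (0 < i)%N && F i x && ~~ F i.-1 x.

Definition in_Cin (Cell : choiceType) (cdeg : Cell -> int)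
    (F : nat -> Cell -> bool) (i : nat) (n : int) (c : chain Cell) : Prop :=
  supp_in (fun x => F i x && (cdeg x == n)) c.

Definition in_Ccin (Cell : choiceType) (cdeg : Cell -> int)
    (V : Cell -> Cell -> bool) (F : nat -> Cell -> bool) (i : nat) (n : int)
    (c : chain Cell) : Prop :=
  supp_in (fun x => [&& is_crit V x, F i x & cdeg x == n]) c.

(* Write tau = partner s for a source cell s.  The boundary of tau is +-s plus
   other source faces, and these have strictly smaller V-path height than s.
   So d21 is unitriangular with respect to the height, and its inverse is
   computed by recursion along V-paths:
   d21^-1 s = +-(tau - d21^-1 (remaining source faces of tau)).
   Every cell met on the way is a face of a partner of a cell met before;
   since V pairs cells of equal filtration index and each C^i is a subcomplex,
   all these cells lie in the filtration level of s.  Hence h = d21^-1 on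
   sources has order <= 0, and f, g, d' are composites of h, d and projections
   onto spans of basis cells, all of which preserve the filtration. *)

From Pilot Require Import Defs.
From HB Require Import structures.
From mathcomp Require Import all_boot all_order all_algebra.
From mathcomp Require Import freeg.
From Stdlib Require Import ClassicalEpsilon.
Set Implicit Arguments. Unset Strict Implicit. Unset Printing Implicit Defensive.
Import Order.TTheory GRing.Theory Num.Theory.
Local Open Scope ring_scope.

Section FreeChains.
Variable Cell : choiceType.
Implicit Types (P Q : pred Cell) (a b c : chain Cell).

Section Lift.
Variables (M : lmodType int) (f : Cell -> M).

HB.instance Definition _ :=
  GRing.isZmodMorphism.Build (chain Cell) M (fglift f) (lift_is_additive f).

Lemma fglift_is_scalable : scalable (fglift f).
Proof. by move=> k a; rewrite -[k in LHS]intz scaler_int raddfMz -scaler_int intz. Qed.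

HB.instance Definition _ :=
  GRing.isScalable.Build int (chain Cell) M *:%R (fglift f) fglift_is_scalable.

Lemma fgliftU x : fglift f << x >> = f x.
Proof. by rewrite liftU scale1r. Qed.

Lemma fgliftE a : fglift f a = \sum_(x <- dom a) coeff x a *: f x.
Proof.
by rewrite -{1}(freeg_sumE a) linear_sum; apply: eq_bigr => x _; apply: liftU.
Qed.

End Lift.

Lemma eq_fglift (M : lmodType int) (f g : Cell -> M) a :
  (forall x, coeff x a != 0 -> f x = g x) -> fglift f a = fglift g a.
Proof.
move=> fg; rewrite !fgliftE !big_seq; apply: eq_bigr => x.
by rewrite mem_dom => /fg ->.
Qed.

Lemma fglift_unit a : fglift (fun x => << x >>) a = a.
Proof.
rewrite fgliftE -[RHS]freeg_sumE; apply: eq_bigr => x _.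
by apply/eqP/freeg_eqP => y; rewrite coeffZ !coeffU mul1r.
Qed.

Lemma linear_fglift (M N : lmodType int) (phi : {linear M -> N}) (f : Cell -> M) a :
  phi (fglift f a) = fglift (phi \o f) a.
Proof. by rewrite !fgliftE linear_sum; apply: eq_bigr => x _; rewrite linearZ. Qed.

Lemma coeff_fglift (f : Cell -> chain Cell) a x :
  coeff x (fglift f a) = fglift (fun y => coeff x (f y) : int^o) a.
Proof. by rewrite !fgliftE raddf_sum; apply: eq_bigr => y _; apply: coeffZ. Qed.

Lemma coeff_proj P a x : coeff x (proj P a) = if P x then coeff x a else 0.
Proof.
rewrite coeff_fglift; case: ifP => Px.
  rewrite [RHS]/coeff; apply: (@eq_fglift int^o) => y _.
  case: ifP => Py; first by rewrite coeffU mul1r.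
  by rewrite coeff0; case: eqP => // yx; rewrite yx Px in Py.
rewrite (@eq_fglift _ _ (fun=> 0)) ?fgliftE ?big1 // => [y _|y _].
  by rewrite scaler0.
case: ifP => Py; last by rewrite coeff0.
by rewrite coeffU mul1r; case: eqP => // yx; rewrite -yx Py in Px.
Qed.

Lemma supp0 P : supp_in P 0.
Proof. by move=> x; rewrite coeff0 eqxx. Qed.

Lemma suppD P a b : supp_in P a -> supp_in P b -> supp_in P (a + b).
Proof.
move=> Pa Pb x; rewrite coeffD; have [/Pa //|a0] := boolP (coeff x a != 0).
by rewrite (eqP (negbNE a0)) add0r => /Pb.
Qed.

Lemma suppZ P k a : supp_in P a -> supp_in P (k *: a).
Proof. by move=> Pa x; rewrite coeffZ mulf_eq0 negb_or => /andP [_ /Pa]. Qed.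

Lemma suppB P a b : supp_in P a -> supp_in P b -> supp_in P (a - b).
Proof. by move=> Pa Pb; rewrite -scaleN1r; apply/suppD/suppZ. Qed.

Lemma suppU P x : P x -> supp_in P << x >>.
Proof. by move=> Px y; rewrite coeffU mul1r pnatr_eq0 eqb0 negbK => /eqP <-. Qed.

Lemma supp_fglift P (f : Cell -> chain Cell) a :
  (forall x, coeff x a != 0 -> supp_in P (f x)) -> supp_in P (fglift f a).
Proof.
move=> Pf; rewrite fgliftE big_seq; elim/big_rec: _ => [|x b]; first exact: supp0.
by rewrite mem_dom => /Pf Px; apply/suppD/suppZ.
Qed.

Lemma supp_sub P Q a : subpred P Q -> supp_in P a -> supp_in Q a.
Proof. by move=> PQ Pa x /Pa /PQ. Qed.

Lemma supp_proj P Q a : supp_in Q a -> supp_in (fun x => P x && Q x) (proj P a).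
Proof.
by move=> Qa x; rewrite coeff_proj; case: ifP => [Px /Qa ->|_]; rewrite ?eqxx.
Qed.

Lemma proj_id P a : supp_in P a -> proj P a = a.
Proof.
move=> Pa; rewrite -[RHS]fglift_unit; apply: eq_fglift => x /Pa Px.
by rewrite Px.
Qed.

End FreeChains.

Lemma decPP (P : Prop) : reflect P (Defs.decP P).
Proof. by rewrite /Defs.decP; case: excluded_middle_informative => h; constructor. Qed.

Section VectorField.
Variables (Cell : choiceType) (cdeg : Cell -> int) (bd : Cell -> chain Cell).
Variable V : Cell -> Cell -> bool.
Hypothesis bd_deg : forall x y, coeff y (bd x) != 0 -> cdeg y = cdeg x - 1.
Hypothesis HV : is_DVF cdeg bd V.

Local Notation src := (is_src V).
Local Notation tgt := (is_tgt V).

Definition partner (s : Cell) : Cell :=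
  if excluded_middle_informative (exists t, V s t) is left h then xchoose h else s.

Lemma V_partner s : src s -> V s (partner s).
Proof.
move/decPP; rewrite /partner; case: excluded_middle_informative => // h _.
exact: xchooseP.
Qed.

Lemma partner_eq s t : V s t -> partner s = t.
Proof.
move=> Vst; have src_s : src s by apply/decPP; exists t.
by have [_ ->] := proj2 HV _ _ _ _ Vst (V_partner src_s) (or_introl erefl).
Qed.

Lemma partner_deg s : src s -> cdeg (partner s) = cdeg s + 1.
Proof. by move/V_partner/(proj1 HV) => []. Qed.

Lemma tgt_partner s : src s -> tgt (partner s).
Proof. by move/V_partner => Vs; apply/decPP; exists s. Qed.

Definition incidence s := coeff s (bd (partner s)).

Lemma incidenceK s : src s -> incidence s * incidence s = 1.
Proof.
by rewrite /incidence => /V_partner/(proj1 HV) [_ [] ->]; rewrite ?mulrNN mulr1.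
Qed.

Definition rest s := proj src (bd (partner s)) - incidence s *: << s >>.

Lemma rest_supp s x : src s -> coeff x (rest s) != 0 ->
  [/\ x != s, src x & coeff x (bd (partner s)) != 0].
Proof.
move=> src_s; rewrite /rest coeffB coeffZ coeffU coeff_proj mul1r.
have [<-|ne] := eqVneq s x; first by rewrite src_s mulr1 subrr eqxx.
by rewrite mulr0 subr0; case: ifP; rewrite ?eqxx.
Qed.

Lemma d21_is_linear : linear (d21 bd V).
Proof. by move=> k a b; rewrite /d21 /proj /bdry !linearP. Qed.

HB.instance Definition _ :=
  GRing.isLinear.Build int (chain Cell) (chain Cell) *:%R (d21 bd V) d21_is_linear.

Lemma d21_partner s : src s ->
  d21 bd V << partner s >> = incidence s *: << s >> + rest s.
Proof.
move=> src_s; rewrite /d21 (proj_id (suppU (tgt_partner src_s))) /bdry fgliftU.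
by rewrite /rest addrC subrK.
Qed.

Variable lam : int -> Cell -> nat.
Hypothesis Vpath_bounded : forall (n : int) (s : Cell), cdeg s = n ->
  forall (k : int) (p : seq (Cell * Cell)),
    Vpath cdeg bd V k p -> starts_from p s -> (size p <= lam n s)%N.

Definition Vpath_length s (j : nat) : bool :=
  Defs.decP (j = 0%N \/ exists k p,
    [/\ Vpath cdeg bd V k p, starts_from p s & size p = j]).

Lemma Vpath_length0 s : exists j, Vpath_length s j.
Proof. by exists 0%N; apply/decPP; left. Qed.

Lemma Vpath_length_bounded s j : Vpath_length s j -> (j <= lam (cdeg s) s)%N.
Proof. by case/decPP => [-> //|[k [p [Vp sp <-]]]]; apply: Vpath_bounded Vp sp. Qed.

Definition height s := ex_maxn (Vpath_length0 s) (@Vpath_length_bounded s).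

Lemma Vpath_deg k p s : Vpath cdeg bd V k p -> starts_from p s -> k = cdeg s + 1.
Proof.
case: p => [|[s' t] p] //= /andP [/andP [/andP [Vst /eqP <-] _] _] /eqP <-.
by case: (proj1 HV _ _ Vst).
Qed.

Lemma Vpath_cons s p s' : src s -> coeff s' (bd (partner s)) != 0 -> s' != s ->
  Vpath cdeg bd V (cdeg s' + 1) p -> starts_from p s' ->
  Vpath cdeg bd V (cdeg s' + 1) ((s, partner s) :: p).
Proof.
move=> src_s face ne; case: p => [|q p] // Vp /eqP eq_q.
have deg_s' : cdeg s' = cdeg s by rewrite (bd_deg face) partner_deg // addrK.
rewrite deg_s' in Vp *; move: Vp; rewrite /Vpath /= V_partner // partner_deg //.
by rewrite eqxx eq_q face ne => /andP [-> ->].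
Qed.

Lemma height_rest s x : src s -> coeff x (rest s) != 0 -> (height x < height s)%N.
Proof.
move=> src_s /(rest_supp src_s) [ne _ face].
rewrite {2}/height; case: ex_maxnP => j _ maxj; apply: maxj; apply/decPP; right.
rewrite /height; case: ex_maxnP => i /decPP [-> _|[k [p [Vp sp <-]]] _].
  exists (cdeg s + 1), [:: (s, partner s)]; split; rewrite //= ?eqxx //.
  by rewrite /Vpath /= V_partner // partner_deg // eqxx.
exists k, ((s, partner s) :: p); split; rewrite //= ?eqxx //.
by move: (Vpath_deg Vp sp) => dk; subst k; apply: Vpath_cons.
Qed.

(* recursion along V-paths; the height of s bounds its depth, so any fuel
   above the height gives the same chain *)
Fixpoint d21_preimage_iter (k : nat) (s : Cell) : chain Cell :=
  if k is k'.+1 then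
    incidence s *: (<< partner s >> - fglift (d21_preimage_iter k') (rest s))
  else 0.

Definition d21_preimage s := d21_preimage_iter (height s).+1 s.

Lemma d21_preimage_iter_stable k k' s :
  src s -> (height s < k)%N -> (height s < k')%N ->
  d21_preimage_iter k s = d21_preimage_iter k' s.
Proof.
elim: k k' s => [|k IHk] [|k'] s src_s //= lt_k lt_k'; congr (_ *: (_ - _)).
apply: eq_fglift => x rest_x; have [_ src_x _] := rest_supp src_s rest_x.
have lt_x := height_rest src_s rest_x.
by apply: IHk => //; apply: leq_trans lt_x _.
Qed.

Lemma d21_preimageE s : src s ->
  d21_preimage s = incidence s *: (<< partner s >> - fglift d21_preimage (rest s)).
Proof.
move=> src_s; rewrite /d21_preimage /=; congr (_ *: (_ - _)).
apply: eq_fglift => x rest_x; have [_ src_x _] := rest_supp src_s rest_x.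
exact: d21_preimage_iter_stable src_x (height_rest src_s rest_x) (ltnSn _).
Qed.

Lemma supp_d21_preimage (P Q : pred Cell) s :
  (forall s, src s -> P s -> Q (partner s)) ->
  (forall s x, src s -> P s -> coeff x (rest s) != 0 -> P x) ->
  src s -> P s -> supp_in Q (d21_preimage s).
Proof.
move=> PQ Prest; rewrite /d21_preimage; move: (height s).+1 => k.
elim: k s => [|k IHk] s src_s Ps /=; first exact: supp0.
apply/suppZ/suppB; first exact/suppU/PQ.
apply: supp_fglift => x rest_x; have [_ src_x _] := rest_supp src_s rest_x.
exact: IHk src_x (Prest _ _ src_s Ps rest_x).
Qed.

Lemma d21_d21_preimage s : src s -> d21 bd V (d21_preimage s) = << s >>.
Proof.
move: s; suff IH k s :
    src s -> (height s < k)%N -> d21 bd V (d21_preimage s) = << s >>.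
  by move=> s src_s; apply: IH src_s (ltnSn _).
elim: k s => [|k IHk] s src_s; rewrite ?ltn0 // => lt_k.
rewrite d21_preimageE // linearZ linearB /= d21_partner // (linear_fglift (d21 bd V)).
rewrite (@eq_fglift _ _ _ (fun x => << x >>)) ?fglift_unit.
  by rewrite addrK scalerA incidenceK // scale1r.
move=> x rest_x; have [_ src_x _] := rest_supp src_s rest_x.
by apply: IHk => //; apply: leq_trans (height_rest src_s rest_x) _.
Qed.

Lemma d21_preimage_d21 t : tgt t -> fglift d21_preimage (d21 bd V << t >>) = << t >>.
Proof.
case/decPP => s Vst; have src_s : src s by apply/decPP; exists t.
rewrite -(partner_eq Vst) d21_partner // linearD linearZ /= fgliftU d21_preimageE //.
by rewrite scalerA incidenceK // scale1r subrK.
Qed.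

Lemma d21_preimage_inverse : is_d21_inverse bd V (fglift d21_preimage).
Proof.
split=> [a src_a|a tgt_a]; first split.
- apply: supp_fglift => x /src_a src_x.
  by apply: (@supp_d21_preimage predT) => // s' src_s' _; apply: tgt_partner.
- rewrite (linear_fglift (d21 bd V)) -[RHS]fglift_unit.
  by apply: eq_fglift => x /src_a; apply: d21_d21_preimage.
- rewrite -{1}(fglift_unit a) (linear_fglift (d21 bd V)).
  rewrite (linear_fglift (fglift d21_preimage)) -[RHS]fglift_unit.
  by apply: eq_fglift => x /tgt_a; apply: d21_preimage_d21.
Qed.

(* d21inv is a classical choice of inverse, but it is unique on source chains *)
Lemma d21inv_src c : supp_in src c -> d21inv bd V c = fglift d21_preimage c.
Proof.
move=> src_c; have [tgt_c d21_c] := d21_preimage_inverse.1 c src_c.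
have [_ inv_l] : is_d21_inverse bd V (d21inv bd V).
  exact: epsilon_spec (ex_intro _ _ d21_preimage_inverse).
by rewrite -{1}d21_c inv_l.
Qed.

Lemma supp_red_h (P Q : pred Cell) c :
  (forall s, src s -> P s -> Q (partner s)) ->
  (forall s x, src s -> P s -> coeff x (rest s) != 0 -> P x) ->
  supp_in P c -> supp_in Q (red_h bd V c).
Proof.
move=> PQ Prest Pc; rewrite /red_h d21inv_src; last first.
  by apply: supp_sub (supp_proj (P := src) Pc) => x /andP [].
apply: supp_fglift => x; rewrite coeff_proj.
by case: ifP => [src_x /Pc|_]; [apply: supp_d21_preimage | rewrite eqxx].
Qed.

Section Filtration.
Variables (m : nat) (F : nat -> Cell -> bool).
Hypothesis F_mono : forall (i : nat) x, (i < m)%N -> F i x -> F i.+1 x.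
Hypothesis F_bdry : forall (i : nat) (c : chain Cell),
  (i <= m)%N -> supp_in (F i) c -> supp_in (F i) (bdry bd c).
Hypothesis V_filt : forall s t, V s t ->
  exists i : nat, (i <= m)%N /\ filt_index F i s /\ filt_index F i t.

Lemma F_le i j x : (i <= j <= m)%N -> F i x -> F j x.
Proof.
case/andP=> le_ij le_jm; elim: j le_ij le_jm => [|j IHj].
  by rewrite leqn0 => /eqP ->.
rewrite leq_eqVlt => /orP [/eqP -> //|lt_ij] lt_jm Fix.
by apply: F_mono lt_jm (IHj lt_ij (ltnW lt_jm) Fix).
Qed.

Lemma F_face i t y : (i <= m)%N -> F i t -> coeff y (bd t) != 0 -> F i y.
Proof.
by move=> le_im Ft; have := F_bdry le_im (suppU Ft); rewrite /bdry fgliftU; apply.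
Qed.

(* s and its partner share a filtration index j, and j <= i as s is in C^i *)
Lemma F_partner i s : (i <= m)%N -> src s -> F i s -> F i (partner s).
Proof.
move=> le_im src_s Fis.
have [j [le_jm [/andP [/andP [j_gt0 _] nFjs] /andP [/andP [_ Fjt] _]]]] :=
  V_filt (V_partner src_s).
have [le_ji|lt_ij] := leqP j i; first by apply: F_le Fjt; rewrite le_ji.
have : F j.-1 s.
  by apply: F_le Fis; rewrite -ltnS (prednK j_gt0) lt_ij (leq_trans (leq_pred j)).
by rewrite (negbTE nFjs).
Qed.

Lemma in_Cin_bdry i n c : (i <= m)%N ->
  in_Cin cdeg F i n c -> in_Cin cdeg F i (n - 1) (bdry bd c).
Proof.
move=> le_im Cc; apply: supp_fglift => x /Cc /andP [Fx /eqP deg_x] y bd_y.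
by rewrite (F_face le_im Fx bd_y) (bd_deg bd_y) deg_x eqxx.
Qed.

Lemma in_Cin_red_h i n c : (i <= m)%N ->
  in_Cin cdeg F i n c -> in_Cin cdeg F i (n + 1) (red_h bd V c).
Proof.
move=> le_im; apply: supp_red_h.
  by move=> s src_s /andP [Fs /eqP <-]; rewrite F_partner // partner_deg // eqxx.
move=> s x src_s /andP [Fs /eqP <-] rest_x.
have [_ _ face] := rest_supp src_s rest_x.
rewrite (F_face le_im (F_partner le_im src_s Fs) face).
by rewrite (bd_deg face) partner_deg // addrK eqxx.
Qed.

End Filtration.
End VectorField.

Theorem theorem3
  (* the free chain complex: bases beta_n, degree of a basis element, and
     the boundary d of each basis element *)
  (Cell : choiceType) (cdeg : Cell -> int) (bd : Cell -> {freeg Cell / int})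
  (Hbd_deg : forall x y, coeff y (bd x) != 0 -> cdeg y = cdeg x - 1)
  (Hdd : forall x, bdry bd (bd x) = 0)
  (* the finite filtration 0 = C^0 <= C^1 <= ... <= C^m = C by
     sub-chain complexes; F i x <-> x in beta cap C^i *)
  (m : nat) (F : nat -> Cell -> bool)
  (HF0 : forall x, ~~ F 0%N x)
  (HFm : forall x, F m x)
  (HFmono : forall (i : nat) x, (i < m)%N -> F i x -> F i.+1 x)
  (HFsub : forall (i : nat) (c : {freeg Cell / int}),
      (i <= m)%N -> supp_in (F i) c -> supp_in (F i) (bdry bd c))
  (* the admissible discrete vector field *)
  (V : Cell -> Cell -> bool)
  (HV : is_DVF cdeg bd V)
  (HVadm : admissible cdeg bd V)
  (HVfilt : forall s t, V s t ->
      exists i : nat, (i <= m)%N /\ filt_index F i s /\ filt_index F i t) :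
  forall (i : nat) (n : int), (i <= m)%N ->
    (* d' preserves the filtration of the critical complex *)
    (forall c, in_Ccin cdeg V F i (n + 1) c ->
               in_Ccin cdeg V F i n (red_d bd V c)) /\
    (* f(C^i_n) <= C^{c,i}_n *)
    (forall c, in_Cin cdeg F i n c -> in_Ccin cdeg V F i n (red_f bd V c)) /\
    (* g(C^{c,i}_n) <= C^i_n *)
    (forall c, in_Ccin cdeg V F i n c -> in_Cin cdeg F i n (red_g bd V c)) /\
    (* h(C^i_n) <= C^i_{n+1} *)
    (forall c, in_Cin cdeg F i n c -> in_Cin cdeg F i (n + 1) (red_h bd V c)).
Proof.
move=> i n le_im; have [lam Vpath_bounded] := HVadm.
have Cbdry := in_Cin_bdry Hbd_deg HFsub le_im.
have Ch := in_Cin_red_h Hbd_deg HV Vpath_bounded HFmono HFsub HVfilt le_im.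
have Ccrit k c : in_Ccin cdeg V F i k c -> in_Cin cdeg F i k c.
  by apply: supp_sub => x /andP [].
have proj_crit k c : in_Cin cdeg F i k c -> in_Ccin cdeg V F i k (proj (is_crit V) c).
  exact: supp_proj.
split; [|split; [|split]] => c Cc.
- have Cdc := Cbdry _ _ (Ccrit _ _ Cc); rewrite addrK in Cdc.
  have Cdhdc := Cbdry _ _ (Ch _ _ Cdc); rewrite addrK in Cdhdc.
  exact: suppB (proj_crit _ _ Cdc) (proj_crit _ _ Cdhdc).
- have Cdhc := Cbdry _ _ (Ch _ _ Cc); rewrite addrK in Cdhc.
  exact: suppB (proj_crit _ _ Cc) (proj_crit _ _ Cdhc).
- have Chdc := Ch _ _ (Cbdry _ _ (Ccrit _ _ Cc)); rewrite subrK in Chdc.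
  exact: suppB (Ccrit _ _ Cc) Chdc.
- exact: Ch.
Qed.
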